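(* Let $n\ge2$, $N\ge1$, $L>0$, $h=L/N$, $\Delta t>0$, and let $b_{ij}>0$ with $b_{ij}=b_{ji}$ for $i\neq j$, $i,j=1,\dots,n$. Let $\rho^k=(\rho^k_1,\dots,\rho^k_n)$ be cell-centered with $\rho^k_{i,\ell}>0$ for all $i,\ell$ and $\sum_{i=1}^n\rho^k_{i,\ell}=1$ for all $\ell$. Then there exists $\delta_0>0$ such that for every $0<\delta\le\delta_0$: an $n$-tuple $\rho^{k+1}$ of cell-centered grid functions with $\rho^{k+1}_{i,\ell}>0$ for all $i,\ell$ is a solution of the scheme (i.e. there is an $n$-tuple $v^{k+1}$ of edge-centered grid functions such that for all $i$ and $\ell$ $$\frac{\rho^{k+1}_{i,\ell}-\rho^k_{i,\ell}}{\Delta t}+\big(d_h(\hat\rho^k_iv^{k+1}_i)\big)_\ell=0,$$ $$-\sum_{j=1}^nb_{ij}\hat\rho^k_{j,\ell+\frac12}\big(v^{k+1}_{i,\ell+\frac12}-v^{k+1}_{j,\ell+\frac12}\big)=\big(D_h\log\rho^{k+1}_i\big)_{\ell+\frac12}-\frac{1}{\sum_{j=1}^n\hat\rho^k_{j,\ell+\frac12}}\sum_{j=1}^n\hat\rho^k_{j,\ell+\frac12}\big(D_h\log\rho^{k+1}_j\big)_{\ell+\frac12},$$ $$\sum_{j=1}^n\hat\rho^k_{j,\ell+\frac12}v^{k+1}_{j,\ell+\frac12}=0\,)$$ if and only if $\rho^{k+1}$ is the $\rho$-component of a minimizer $(\rho,w)$ over the set $K_\delta$ of the functional $$J(\rho,w)=\frac{1}{4\Delta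 t}\,h\sum_{\ell=1}^N\sum_{i,j=1}^nb_{ij}\hat\rho^k_{i,\ell+\frac12}\hat\rho^k_{j,\ell+\frac12}\big(w_{i,\ell+\frac12}-w_{j,\ell+\frac12}\big)^2+h\sum_{\ell=1}^N\sum_{i=1}^n\rho_{i,\ell}\log\rho_{i,\ell},$$ where $K_\delta$ is the set of pairs $(\rho,w)$, $\rho$ an $n$-tuple of cell-centered and $w$ an $n$-tuple of edge-centered grid functions, such that for all $i=1,\dots,n$ and $\ell=1,\dots,N$: $\rho_{i,\ell}\ge\delta$, $\rho_{i,\ell}-\rho^k_{i,\ell}+\big(d_h(\hat\rho^k_iw_i)\big)_\ell=0$, $\sum_{i=1}^n\hat\rho^k_{i,\ell+\frac12}w_{i,\ell+\frac12}=0$, and $\sum_{i=1}^n\rho_{i,\ell}=1$.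
   Context: Grid on the torus $[0,L]$ with $N$ intervals, $h=L/N$: cell-centered grid functions are $N$-periodic sequences $(f_\ell)_{\ell\in\mathbb Z}$ (values at $\ell h$); edge-centered ones are $N$-periodic sequences $(f_{\ell+\frac12})$ (values at $(\ell+\frac12)h$). For edge-centered $\phi$, $(d_h\phi)_\ell=(\phi_{\ell+\frac12}-\phi_{\ell-\frac12})/h$; for cell-centered $f$, $(D_hf)_{\ell+\frac12}=(f_{\ell+1}-f_\ell)/h$ and $\hat f_{\ell+\frac12}=(f_\ell+f_{\ell+1})/2$. Products and logarithms are pointwise; terms with $j=i$ vanish, so $b_{ii}$ plays no role. *)

From HB Require Import structures.
From mathcomp Require Import all_boot all_order all_algebra.
From mathcomp Require Import reals exp.
Set Implicit Arguments. Unset Strict Implicit. Unset Printing Implicit Defensive.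
Import Order.TTheory GRing.Theory Num.Theory.
Local Open Scope ring_scope.

(* Grid functions on the torus with N cells are functions 'I_N -> R.
   Cell-centered f : f l = f_l.  Edge-centered phi : phi l = phi_{l+1/2}.
   Periodicity is encoded by the cyclic successor/predecessor ordS/ord_pred. *)

Section Grid.
Variables (R : realType) (N : nat) (h : R).

Definition d_h (phi : 'I_N -> R) (l : 'I_N) : R :=
  (phi l - phi (ord_pred l)) / h.

Definition D_h (f : 'I_N -> R) (l : 'I_N) : R :=
  (f (ordS l) - f l) / h.

Definition hat (f : 'I_N -> R) (l : 'I_N) : R :=
  (f l + f (ordS l)) / 2.
End Grid.

Section Scheme.
Variables (R : realType) (n N : nat) (L dt : R) (b : 'I_n -> 'I_n -> R)
  (rhok : 'I_n -> 'I_N -> R).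

Definition hstep : R := L / N%:R.

Definition gmul (f g : 'I_N -> R) : 'I_N -> R := fun l => f l * g l.
Definition glog (f : 'I_N -> R) : 'I_N -> R := fun l => ln (f l).

Definition scheme_with (rhonew : 'I_n -> 'I_N -> R) (v : 'I_n -> 'I_N -> R) : Prop :=
  forall (i : 'I_n) (l : 'I_N),
    [/\ (rhonew i l - rhok i l) / dt + d_h hstep (gmul (hat (rhok i)) (v i)) l = 0,
        - (\sum_(j < n) b i j * hat (rhok j) l * (v i l - v j l))
          = D_h hstep (glog (rhonew i)) l
            - (\sum_(j < n) hat (rhok j) l)^-1
              * (\sum_(j < n) hat (rhok j) l * D_h hstep (glog (rhonew j)) l)
      & \sum_(j < n) hat (rhok j) l * v j l = 0].

Definition solves_scheme (rhonew : 'I_n -> 'I_N -> R) : Prop :=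
  exists v : 'I_n -> 'I_N -> R, scheme_with rhonew v.

Definition K_delta (delta : R) (rho w : 'I_n -> 'I_N -> R) : Prop :=
  forall (i : 'I_n) (l : 'I_N),
    [/\ delta <= rho i l,
        rho i l - rhok i l + d_h hstep (gmul (hat (rhok i)) (w i)) l = 0,
        \sum_(j < n) hat (rhok j) l * w j l = 0
      & \sum_(j < n) rho j l = 1].

Definition J (rho w : 'I_n -> 'I_N -> R) : R :=
  (4 * dt)^-1 * (hstep * \sum_(l < N) \sum_(i < n) \sum_(j < n)
      b i j * hat (rhok i) l * hat (rhok j) l * (w i l - w j l) ^+ 2)
  + hstep * \sum_(l < N) \sum_(i < n) rho i l * ln (rho i l).

Definition is_minimizer (delta : R) (rho w : 'I_n -> 'I_N -> R) : Prop :=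
  K_delta delta rho w /\
  forall rho' w' : 'I_n -> 'I_N -> R, K_delta delta rho' w' -> J rho w <= J rho' w'.
End Scheme.

From HB Require Import structures.
From mathcomp Require Import all_boot all_order all_algebra.
From mathcomp Require Import reals exp.
From mathcomp Require Import boolp classical_sets topology normedtype sequences derive.
From mathcomp Require Import ring lra.
Set Implicit Arguments. Unset Strict Implicit. Unset Printing Implicit Defensive.
Import Order.TTheory GRing.Theory Num.Theory.
Import numFieldTopology.Exports numFieldNormedType.Exports.
Local Open Scope ring_scope.

(* Solving the transport constraint of K_delta for the density, rho = rho_of w, reduces the
   problem to the functional Jw w = J (rho_of w) w of the velocities w subject to the linear
   constraint \sum_i rhat_i w_i = 0.  Jw is a convex quadratic dissipation plus the entropy,
   whose remainder after linearization is the Bregman divergence of x ln x; so a critical point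
   of Jw along admissible directions minimizes it, and all critical points and minimizers with
   positive density share its density.  By the Lagrange multiplier rule, w is critical iff
   v = w / dt solves the scheme.  A critical point with density at least some eps > 0 exists:
   sublevel sets of Jw are bounded, so Jw has a minimizer on {rho_of w >= eps} by compactness,
   and for eps small this minimizer stays off the constraint, because moving mass of a depleted
   species in from a cell where it is abundant lowers the entropy by more than it costs in
   dissipation.  Then delta0 := eps works. *)

Section Entropy.
Variable R : realType.

Lemma ln_le_subr1 (x : R) : 0 < x -> ln x <= x - 1.
Proof. by move=> x0; have := @le_ln1Dx R (x - 1); rewrite (addrC 1) subrK; apply; lra. Qed.

Lemma ln_lt_subr1 (x : R) : 0 < x -> x != 1 -> ln x < x - 1.
Proof.
move=> x0 x1; have /expR_gt1Dx : ln x != 0 by rewrite ln_eq0.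
rewrite lnK ?posrE //; lra.
Qed.

Definition xlnx_bregman (x y : R) := x * ln x - y * ln y - (ln y + 1) * (x - y).

Lemma xlnx_bregmanE (x y : R) : 0 < x -> 0 < y ->
  xlnx_bregman x y = (y - x) - x * ln (y / x).
Proof.
by move=> x0 y0; rewrite /xlnx_bregman lnM ?posrE ?invr_gt0 // lnV ?posrE //; ring.
Qed.

Lemma xlnx_bregman_gt0 (x y : R) : 0 < x -> 0 < y -> x != y -> 0 < xlnx_bregman x y.
Proof.
move=> x0 y0 xy; rewrite xlnx_bregmanE // subr_gt0.
have yx1 : y / x != 1.
  by apply: contraNneq xy => e; rewrite -[y](divfK (lt0r_neq0 x0)) e mul1r.
have -> : y - x = x * (y / x - 1) by field; rewrite lt0r_neq0.
by rewrite ltr_pM2l // ln_lt_subr1 // divr_gt0.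
Qed.

Lemma xlnx_bregman_ge0 (x y : R) : 0 < x -> 0 < y -> 0 <= xlnx_bregman x y.
Proof.
move=> x0 y0; have [->|xy] := eqVneq x y; last exact/ltW/xlnx_bregman_gt0.
by rewrite /xlnx_bregman !subrr mulr0 subrr.
Qed.

Lemma xlnx_bregman_le (x y : R) : 0 < x -> 0 < y -> xlnx_bregman x y <= (x - y) ^+ 2 / y.
Proof.
move=> x0 y0; rewrite xlnx_bregmanE // -[y / x]invf_div lnV ?posrE ?divr_gt0 //.
have : x * ln (x / y) <= x * (x / y - 1) by rewrite ler_pM2l // ln_le_subr1 // divr_gt0.
have -> : (x - y) ^+ 2 / y = x * (x / y - 1) - (x - y) by field; rewrite lt0r_neq0.
lra.
Qed.

Lemma xlnx_ge_N1 (x : R) : 0 < x -> -1 <= x * ln x.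
Proof.
move=> x0; have := xlnx_bregman_ge0 x0 ltr01.
rewrite /xlnx_bregman ln1 mulr0 subr0 add0r mul1r; lra.
Qed.

End Entropy.

Section FiniteSums.
Variable R : realFieldType.

Lemma sum_antisym_eq0 (I : finType) (c : I -> I -> R) :
  (forall i j, c j i = - c i j) -> \sum_i \sum_j c i j = 0.
Proof.
move=> anti; set S := \sum_i _.
have : S = - S.
  rewrite {1}/S exchange_big /= /S -sumrN; apply: eq_bigr => j _.
  by rewrite -sumrN; apply: eq_bigr => i _; exact: anti.
lra.
Qed.

Lemma sum_antisymMB (I : finType) (c : I -> I -> R) (z : I -> R) :
  (forall i j, c j i = - c i j) ->
  \sum_i \sum_j c i j * (z i - z j) = 2 * \sum_i \sum_j c i j * z i.
Proof.
move=> anti; have S0 : \sum_i \sum_j c i j * (z i + z j) = 0.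
  by apply: sum_antisym_eq0 => i j; rewrite anti; ring.
transitivity (\sum_i (2 * \sum_j c i j * z i - \sum_j c i j * (z i + z j))).
  apply: eq_bigr => i _; rewrite mulr_sumr -sumrB.
  by apply: eq_bigr => j _; ring.
by rewrite sumrB S0 subr0 mulr_sumr.
Qed.

Lemma ler_sum_term (I : finType) (F : I -> R) i : (forall j, 0 <= F j) -> F i <= \sum_j F j.
Proof.
move=> F0; rewrite (bigD1 i) //= lerDl.
by apply: sumr_ge0 => j _.
Qed.

Lemma exists_pos_lbound (I : finType) (g : I -> R) :
  (forall i, 0 < g i) -> exists2 m, 0 < m & forall i, m <= g i.
Proof.
move=> g0; exists (\big[Num.min/1]_i g i); last by move=> i; exact: bigmin_le.
by apply: lt_bigmin => // i _; exact: g0.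
Qed.

Lemma exists_ge_mean (I : finType) (F : I -> R) c : (0 < #|I|)%N ->
  #|I|%:R * c <= \sum_i F i -> exists i, c <= F i.
Proof.
move=> /card_gt0P [i0 _] Sc; apply/not_existsP => /= Flt.
suff : \sum_i F i < \sum_(i : I) c by rewrite sumr_const -mulr_natl; lra.
apply: ltr_sum; first by apply/hasP; exists i0; rewrite ?mem_index_enum.
by move=> i _; rewrite ltNge; apply/negP => /Flt.
Qed.

Lemma sum_delta (I : finType) (a : I) (F : I -> R) : \sum_k (k == a)%:R * F k = F a.
Proof.
by rewrite (bigD1 a) //= eqxx mul1r big1 ?addr0 // => k /negbTE ->; rewrite mul0r.
Qed.

Lemma sum_delta1 (I : finType) (a : I) : \sum_k ((k == a)%:R : R) = 1.
Proof. by rewrite (bigD1 a) //= eqxx big1 ?addr0 // => k /negbTE ->. Qed.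

Lemma weighted_mean_constP (I : finType) (a G : I -> R) :
  (forall i, a i != 0) -> \sum_i a i = 1 ->
  (forall z, \sum_i a i * z i = 0 -> \sum_i a i * z i * G i = 0) <->
  (forall i, G i = \sum_j a j * G j).
Proof.
move=> a0 a1; split => [orth i | constG z z0]; last first.
  rewrite (eq_bigr (fun k => a k * z k * \sum_j a j * G j)) => [|k _]; last by rewrite -(constG k).
  by rewrite -mulr_suml z0 mul0r.
pose z k := (k == i)%:R / a i - 1.
have az k : a k * z k = (k == i)%:R - a k.
  rewrite /z mulrBr mulr1; case: eqVneq => [->|_]; last by rewrite mul0r mulr0.
  by rewrite mul1r divff.
have S1 : \sum_k a k * z k = 0.
  by rewrite (eq_bigr _ (fun k _ => az k)) sumrB a1 sum_delta1 subrr.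
have /eqP := orth z S1; rewrite (eq_bigr _ (fun k _ => congr1 (fun x => x * G k) (az k))).
by under eq_bigr do rewrite mulrBl; rewrite sumrB sum_delta subr_eq0 => /eqP.
Qed.

Lemma centered_norm_le (I : finType) (a w : I -> R) D :
  (forall j, 0 <= a j) -> \sum_j a j = 1 -> \sum_j a j * w j = 0 ->
  (forall i j, `|w i - w j| <= D) -> forall i, `|w i| <= D.
Proof.
move=> a0 a1 w0 wD i.
have -> : w i = \sum_j a j * (w i - w j).
  by under eq_bigr do rewrite mulrBr; rewrite sumrB w0 subr0 -mulr_suml a1 mul1r.
apply: le_trans (ler_norm_sum _ _ _) _.
rewrite -[D]mul1r -a1 mulr_suml; apply: ler_sum => j _.
by rewrite normrM ger0_norm // ler_wpM2l.
Qed.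

Lemma normr_le1Dsqr (x : R) : `|x| <= 1 + x ^+ 2.
Proof. by rewrite -real_normK ?num_real //; have := normr_ge0 x; nra. Qed.

Lemma first_order_ge0 (D C t0 : R) : 0 < t0 ->
  (forall t, 0 < t -> t <= t0 -> 0 <= t * D + t ^+ 2 * C) -> 0 <= D.
Proof.
move=> t00 small; rewrite leNgt; apply/negP => D0.
pose t := Num.min t0 (- D / (`|C| + 1)).
have C1 : 0 < `|C| + 1 by rewrite ltr_pwDr.
have t0p : 0 < t by rewrite lt_min t00 divr_gt0 // oppr_gt0.
have tC : t * (`|C| + 1) <= - D by rewrite -ler_pdivlMr // ge_min lexx orbT.
have tt0 : t <= t0 by rewrite ge_min lexx.
have := small t t0p tt0.
have : t * C <= t * `|C| by rewrite ler_pM2l // ler_norm.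
rewrite expr2; nra.
Qed.

End FiniteSums.

Section Continuity.
Variables (R : realType) (T : topologicalType).

Lemma continuous_sum (I : Type) (r : seq I) (F : I -> T -> R) x :
  (forall i, {for x, continuous (F i)}) -> {for x, continuous (fun y => \sum_(i <- r) F i y)}.
Proof.
by move=> cF; apply: cvg_big => //; [exact: (@add_continuous R^o) | move=> i _; exact: cF].
Qed.

Lemma continuous_lnf (f : T -> R) x :
  {for x, continuous f} -> 0 < f x -> {for x, continuous (fun y => ln (f y))}.
Proof. by move=> cf fx; apply: (continuous_comp cf); exact: continuous_ln. Qed.

End Continuity.

Section PeriodicGrid.
Context {R : realType} {N : nat}.

Lemma sum_ord_pred (f : 'I_N -> R) : \sum_l f (ord_pred l) = \sum_l f l.
Proof. by rewrite [RHS](reindex_inj (@ord_pred_inj N)). Qed.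

Lemma sum_ordS (f : 'I_N -> R) : \sum_l f (ordS l) = \sum_l f l.
Proof. by rewrite [RHS](reindex_inj (@ordS_inj N)). Qed.

Lemma sum_d_h (h : R) (phi : 'I_N -> R) : \sum_l d_h h phi l = 0.
Proof. by rewrite /d_h -mulr_suml sumrB sum_ord_pred subrr mul0r. Qed.

Lemma sum_d_hM (h : R) (phi g : 'I_N -> R) :
  \sum_l d_h h phi l * g l = - \sum_l phi l * D_h h g l.
Proof.
have shift : \sum_l phi (ord_pred l) * g l = \sum_l phi l * g (ordS l).
  by rewrite -(sum_ordS (fun l => phi (ord_pred l) * g l)); under eq_bigr do rewrite ordSK.
transitivity (h^-1 * (\sum_l phi l * g l - \sum_l phi (ord_pred l) * g l)).
  by rewrite -sumrB mulr_sumr; apply: eq_bigr => l _; rewrite /d_h; ring.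
by rewrite shift -sumrB mulr_sumr -sumrN; apply: eq_bigr => l _; rewrite /D_h; ring.
Qed.

Lemma hat_gt0 (f : 'I_N -> R) l : (forall l, 0 < f l) -> 0 < hat f l.
Proof. by move=> f0; rewrite /hat divr_gt0 ?addr_gt0. Qed.

Lemma sum_hat (I : finType) (F : I -> 'I_N -> R) l :
  \sum_i hat (F i) l = hat (fun l => \sum_i F i l) l.
Proof. by rewrite /hat -mulr_suml big_split. Qed.

Definition heaviside (a l : 'I_N) : R := (a <= l)%N%:R.

Lemma heavisideB_pred (a l : 'I_N) :
  heaviside a l - heaviside a (ord_pred l) = (l == a)%:R - (val l == 0%N)%:R.
Proof.
have aN := ltn_ord a; rewrite /heaviside /=; case: l => [[|m] lm] /=.
  rewrite add0n modn_small ?ltn_predL //.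
  have -> : (a <= N.-1)%N by rewrite -ltnS prednK.
  by rewrite leqn0 mulr1n -val_eqE /= eq_sym.
rewrite modnDr modn_small; last exact: ltnW.
rewrite subr0 leq_eqVlt ltnS.
have -> : (Ordinal lm == a) = (a == m.+1 :> nat) by rewrite eq_sym.
by case: eqVneq => [->|_]; rewrite ?ltnn ?subr0 ?subrr.
Qed.

Lemma d_h_heavisideB (h : R) (a b l : 'I_N) : h != 0 ->
  d_h h (fun l => h * (heaviside a l - heaviside b l)) l = (l == a)%:R - (l == b)%:R.
Proof.
move=> h0; have := heavisideB_pred a l; have := heavisideB_pred b l.
rewrite /d_h -mulrBr mulrC mulKf //; lra.
Qed.

Lemma normr_heavisideB (a b l : 'I_N) : `|heaviside a l - heaviside b l| <= 1.
Proof.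
by rewrite /heaviside; do 2 case: (_ <= _)%N;
  rewrite ?mulr1n ?mulr0n ?subrr ?subr0 ?sub0r ?normrN ?normr0 ?normr1.
Qed.

End PeriodicGrid.

Section Scheme.
Variables (R : realType) (n N : nat) (L dt : R) (b : 'I_n -> 'I_n -> R)
  (rhok : 'I_n -> 'I_N -> R).
Hypotheses (n_gt0 : (0 < n)%N) (N_gt0 : (0 < N)%N) (L_gt0 : 0 < L) (dt_gt0 : 0 < dt).
Hypothesis b_gt0_sym : forall i j : 'I_n, i != j -> 0 < b i j /\ b i j = b j i.
Hypothesis rhok_gt0 : forall i l, 0 < rhok i l.
Hypothesis sum_rhok : forall l, \sum_i rhok i l = 1.

Local Notation h := (hstep N L).
Local Notation rhat i l := (hat (rhok i) l).
Local Notation grid := ('I_n -> 'I_N -> R).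

Lemma h_gt0 : 0 < h.
Proof. by rewrite /hstep divr_gt0 ?ltr0n. Qed.

Lemma N_mul_h : N%:R * h = L.
Proof. by rewrite /hstep mulrC divfK ?pnatr_eq0 -?lt0n. Qed.

Lemma rhat_gt0 i l : 0 < rhat i l.
Proof. exact: hat_gt0. Qed.

Lemma sum_rhat l : \sum_i rhat i l = 1.
Proof. by rewrite sum_hat /hat !sum_rhok; lra. Qed.

Lemma rhat_le1 i l : rhat i l <= 1.
Proof.
rewrite -(sum_rhat l); apply: (@ler_sum_term _ _ (fun j => rhat j l)) => j.
exact/ltW/rhat_gt0.
Qed.

Lemma rhok_le1 i l : rhok i l <= 1.
Proof. by rewrite -(sum_rhok l); apply: ler_sum_term => j; exact: ltW. Qed.

Lemma b_antisym i j (x y : R) : b j i * (y - x) = - (b i j * (x - y)).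
Proof.
by have [->|/b_gt0_sym [_ ->]] := eqVneq i j; rewrite -mulrN opprB.
Qed.

Definition admissible (w : grid) := forall l, \sum_i rhat i l * w i l = 0.
Definition div_flux (w : grid) i l := d_h h (gmul (hat (rhok i)) (w i)) l.
Definition rho_of (w : grid) i l := rhok i l - div_flux w i l.
Definition rho_pos (w : grid) := forall i l, 0 < rho_of w i l.
Definition feasible delta (w : grid) := admissible w /\ forall i l, delta <= rho_of w i l.
Definition Jw (w : grid) := J L dt b rhok (rho_of w) w.

Lemma rho_of_shift (w z : grid) t i l :
  rho_of (fun i l => w i l + t * z i l) i l = rho_of w i l - t * div_flux z i l.
Proof. by rewrite /rho_of /div_flux /d_h /gmul; ring. Qed.

Lemma rho_ofB (w w' : grid) i l :
  rho_of w' i l - rho_of w i l = - div_flux (fun i l => w' i l - w i l) i l.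
Proof. by rewrite /rho_of /div_flux /d_h /gmul; ring. Qed.

Lemma rho_of0 : rho_of (fun _ _ => 0) = rhok.
Proof.
apply/funext => i; apply/funext => l.
by rewrite /rho_of /div_flux /d_h /gmul !mulr0 subrr mul0r subr0.
Qed.

Lemma rho_pos0 : rho_pos (fun _ _ => 0).
Proof. by move=> i l; rewrite rho_of0. Qed.

Lemma admissible0 : admissible (fun _ _ => 0).
Proof. by move=> l; rewrite big1 // => i _; rewrite mulr0. Qed.

Lemma admissibleZ t (z : grid) : admissible z -> admissible (fun i l => t * z i l).
Proof. by move=> az l; under eq_bigr do rewrite mulrCA; rewrite -mulr_sumr az mulr0. Qed.

Lemma admissible_shift (w z : grid) t :
  admissible w -> admissible z -> admissible (fun i l => w i l + t * z i l).
Proof.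
move=> aw az l; under eq_bigr do rewrite mulrDr mulrCA.
by rewrite big_split /= -mulr_sumr aw az mulr0 addr0.
Qed.

Lemma admissibleB (w w' : grid) :
  admissible w -> admissible w' -> admissible (fun i l => w' i l - w i l).
Proof. by move=> aw aw' l; under eq_bigr do rewrite mulrBr; rewrite sumrB aw aw' subrr. Qed.

Lemma sum_rho_of (w : grid) l : admissible w -> \sum_i rho_of w i l = 1.
Proof.
move=> aw; rewrite sumrB sum_rhok /div_flux /d_h /gmul -mulr_suml sumrB.
by rewrite !aw subrr mul0r subr0.
Qed.

Lemma rho_of_le1 (w : grid) i l : admissible w -> rho_pos w -> rho_of w i l <= 1.
Proof.
move=> aw pw; rewrite -(sum_rho_of l aw).
by apply: (@ler_sum_term _ _ (rho_of w ^~ l)) => j; exact: ltW.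
Qed.

Lemma mass_rho_of (w : grid) i : \sum_l rho_of w i l = \sum_l rhok i l.
Proof. by rewrite sumrB sum_d_h subr0. Qed.

Lemma feasible_pos delta (w : grid) : 0 < delta -> feasible delta w -> rho_pos w.
Proof. by move=> d0 [_ wd] i l; exact: lt_le_trans d0 (wd i l). Qed.

Lemma K_deltaP delta rho (w : grid) :
  K_delta L rhok delta rho w <-> rho = rho_of w /\ feasible delta w.
Proof.
split=> [K | [-> [aw wd]] i l]; last first.
  by split; [exact: wd | rewrite /rho_of /div_flux; ring | exact: aw | exact: sum_rho_of].
have rhoE : rho = rho_of w.
  apply/funext => i; apply/funext => l; have [_ e _ _] := K i l.
  by rewrite /rho_of /div_flux; lra.
split=> //; split=> [l|i l]; first by have [_ _ e _] := K (Ordinal n_gt0) l.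
by have [e _ _ _] := K i l; rewrite -rhoE.
Qed.

(** * Critical points of the reduced functional *)

Definition dissipation (w : grid) := (4 * dt)^-1 * (h * \sum_l \sum_i \sum_j
  b i j * rhat i l * rhat j l * (w i l - w j l) ^+ 2).
Definition entropy (rho : grid) := h * \sum_l \sum_i rho i l * ln (rho i l).

Lemma JwE (w : grid) : Jw w = dissipation w + entropy (rho_of w).
Proof. by []. Qed.

Definition friction (w : grid) i l := \sum_j b i j * rhat j l * (w i l - w j l).
Definition force (w : grid) i l := dt^-1 * friction w i l + D_h h (glog (rho_of w i)) l.
Definition balanced (w : grid) := forall i l, force w i l = \sum_j rhat j l * force w j l.
Definition dJw (w z : grid) := h * \sum_l \sum_i rhat i l * z i l * force w i l.

Lemma dissipation_term_ge0 (w : grid) l i j :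
  0 <= b i j * rhat i l * rhat j l * (w i l - w j l) ^+ 2.
Proof.
have [->|/b_gt0_sym [bij _]] := eqVneq i j; first by rewrite subrr expr2 !mulr0.
apply: mulr_ge0; last exact: sqr_ge0.
by apply/ltW/mulr_gt0; [apply: mulr_gt0 | ]; rewrite ?rhat_gt0.
Qed.

Lemma dissipation_ge0 (w : grid) : 0 <= dissipation w.
Proof.
rewrite /dissipation; apply: mulr_ge0; first by rewrite invr_ge0 mulr_ge0 // ltW.
apply: mulr_ge0; first exact: ltW h_gt0.
by do 3 (apply: sumr_ge0 => ? _); exact: dissipation_term_ge0.
Qed.

Lemma dissipation_term_le (w : grid) l i j :
  b i j * rhat i l * rhat j l * (w i l - w j l) ^+ 2 <= 4 * dt / h * dissipation w.
Proof.
have -> : 4 * dt / h * dissipation w = \sum_l \sum_i \sum_j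
    b i j * rhat i l * rhat j l * (w i l - w j l) ^+ 2.
  by rewrite /dissipation; field; rewrite !lt0r_neq0 ?h_gt0.
do 3 (apply: le_trans (ler_sum_term _ _) => [|?]; last by
  do ?[apply: sumr_ge0 => ? _]; exact: dissipation_term_ge0).
exact: lexx.
Qed.

Lemma dissipationZ t (w : grid) :
  dissipation (fun i l => t * w i l) = t ^+ 2 * dissipation w.
Proof.
rewrite /dissipation [RHS]mulrCA; congr (_ * _); rewrite [RHS]mulrCA; congr (_ * _).
rewrite mulr_sumr; apply: eq_bigr => l _; rewrite mulr_sumr; apply: eq_bigr => i _.
by rewrite mulr_sumr; apply: eq_bigr => j _; ring.
Qed.

Lemma sum_rhat_friction (w : grid) l : \sum_i rhat i l * friction w i l = 0.
Proof.
rewrite (eq_bigr (fun i => \sum_j b i j * (w i l - w j l) * (rhat i l * rhat j l))) => [|i _].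
  by apply: sum_antisym_eq0 => i j; rewrite b_antisym mulNr [rhat j l * _]mulrC.
by rewrite /friction mulr_sumr; apply: eq_bigr => j _; ring.
Qed.

Lemma dissipationD (w z : grid) :
  dissipation (fun i l => w i l + z i l) = dissipation w
    + dt^-1 * (h * \sum_l \sum_i rhat i l * z i l * friction w i l) + dissipation z.
Proof.
pose c l i j := b i j * (w i l - w j l) * (rhat i l * rhat j l).
have cross l : \sum_i \sum_j c l i j * (z i l - z j l)
    = 2 * \sum_i rhat i l * z i l * friction w i l.
  rewrite sum_antisymMB => [|i j]; last by rewrite /c b_antisym [rhat j l * _]mulrC mulNr.
  congr (_ * _); apply: eq_bigr => i _; rewrite /friction mulr_sumr.
  by apply: eq_bigr => j _; rewrite /c; ring.
rewrite /dissipation.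
transitivity ((4 * dt)^-1 * (h * \sum_l
    (\sum_i \sum_j b i j * rhat i l * rhat j l * (w i l - w j l) ^+ 2
    + 2 * \sum_i \sum_j c l i j * (z i l - z j l)
    + \sum_i \sum_j b i j * rhat i l * rhat j l * (z i l - z j l) ^+ 2))).
  congr (_ * (_ * _)); apply: eq_bigr => l _; rewrite mulr_sumr -!big_split /=.
  apply: eq_bigr => i _; rewrite mulr_sumr -!big_split /=.
  by apply: eq_bigr => j _; rewrite /c; ring.
under eq_bigr do rewrite cross.
rewrite !big_split /= -!mulr_sumr; field; exact: lt0r_neq0.
Qed.

Lemma entropy_ge (rho : grid) : (forall i l, 0 < rho i l) ->
  - (h * \sum_(l < N) \sum_(i < n) 1) <= entropy rho.
Proof.
move=> rho0; rewrite /entropy -mulrN ler_wpM2l ?(ltW h_gt0) // -sumrN.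
by apply: ler_sum => l _; rewrite -sumrN; apply: ler_sum => i _; exact: xlnx_ge_N1.
Qed.

Lemma sum_div_fluxM (z g : grid) :
  \sum_l \sum_i div_flux z i l * g i l = - \sum_l \sum_i rhat i l * z i l * D_h h (g i) l.
Proof.
rewrite exchange_big [in RHS]exchange_big -sumrN; apply: eq_bigr => i _.
by rewrite /div_flux sum_d_hM.
Qed.

Lemma entropy_sub (w w' : grid) :
  entropy (rho_of w') - entropy (rho_of w) =
    h * \sum_l \sum_i rhat i l * (w' i l - w i l) * D_h h (glog (rho_of w i)) l
    + h * \sum_l \sum_i xlnx_bregman (rho_of w' i l) (rho_of w i l).
Proof.
have mass0 : \sum_l \sum_i (rho_of w' i l - rho_of w i l) = 0.
  under eq_bigr do under eq_bigr do rewrite rho_ofB.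
  by rewrite exchange_big big1 // => i _; rewrite sumrN sum_d_h oppr0.
have S1 : \sum_l \sum_i (rho_of w' i l - rho_of w i l) * ln (rho_of w i l)
    = \sum_l \sum_i rhat i l * (w' i l - w i l) * D_h h (glog (rho_of w i)) l.
  under eq_bigr do under eq_bigr do rewrite rho_ofB mulNr.
  by under eq_bigr do rewrite sumrN; rewrite sumrN sum_div_fluxM opprK.
rewrite /entropy -mulrBr -sumrB.
transitivity (h * (\sum_l \sum_i (rho_of w' i l - rho_of w i l) * ln (rho_of w i l)
    + \sum_l \sum_i xlnx_bregman (rho_of w' i l) (rho_of w i l)
    + \sum_l \sum_i (rho_of w' i l - rho_of w i l))).
  rewrite -!big_split /=; congr (_ * _); apply: eq_bigr => l _.
  by rewrite -sumrB -!big_split /=; apply: eq_bigr => i _; rewrite /xlnx_bregman; ring.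
by rewrite S1 mass0 addr0 mulrDr.
Qed.

Lemma dJwE (w z : grid) : dJw w z = dt^-1 * (h * \sum_l \sum_i rhat i l * z i l * friction w i l)
  + h * \sum_l \sum_i rhat i l * z i l * D_h h (glog (rho_of w i)) l.
Proof.
rewrite /dJw mulrCA -mulrDr; congr (_ * _); rewrite mulr_sumr -big_split /=.
apply: eq_bigr => l _; rewrite mulr_sumr -big_split /=.
by apply: eq_bigr => i _; rewrite /force; ring.
Qed.

Lemma dJwZ (w z : grid) t : dJw w (fun i l => t * z i l) = t * dJw w z.
Proof.
rewrite /dJw mulrCA; congr (_ * _); rewrite mulr_sumr; apply: eq_bigr => l _.
by rewrite mulr_sumr; apply: eq_bigr => i _; ring.
Qed.

Lemma Jw_sub (w w' : grid) :
  Jw w' - Jw w = dJw w (fun i l => w' i l - w i l) + dissipation (fun i l => w' i l - w i l)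
    + h * \sum_l \sum_i xlnx_bregman (rho_of w' i l) (rho_of w i l).
Proof.
have e : w' = fun i l => w i l + (w' i l - w i l).
  by apply/funext => i; apply/funext => l; rewrite addrC subrK.
rewrite !JwE [in dissipation w']e dissipationD dJwE; have := entropy_sub w w'; lra.
Qed.

Lemma balancedP (w : grid) : balanced w <-> forall z, admissible z -> dJw w z = 0.
Proof.
have mean_const l := @weighted_mean_constP _ _ (fun i => rhat i l) (fun i => force w i l)
  (fun i => lt0r_neq0 (rhat_gt0 i l)) (sum_rhat l).
split=> [bal z az | stat i l].
  by rewrite /dJw big1 ?mulr0 // => l _; apply: (proj2 (mean_const l)) (bal ^~ l) _ (az l).
apply: (proj1 (mean_const l)) => zl azl.
pose z i l' := if l' == l then zl i else 0.
have az : admissible z.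
  move=> l'; rewrite /z; case: eqP => [->|_]; first exact: azl.
  by rewrite big1 // => k _; rewrite mulr0.
have := stat z az; rewrite /dJw (bigD1 l) //= [X in _ + X]big1 => [|l' nl]; last first.
  by rewrite big1 // => k _; rewrite /z (negbTE nl) mulr0 mul0r.
by rewrite addr0 /z eqxx /= => /eqP; rewrite mulf_eq0 (gt_eqF h_gt0) => /eqP.
Qed.

Lemma sum_rhat_force (w : grid) l :
  \sum_j rhat j l * force w j l = \sum_j rhat j l * D_h h (glog (rho_of w j)) l.
Proof.
under eq_bigr do rewrite /force mulrDr mulrCA.
by rewrite big_split /= -mulr_sumr sum_rhat_friction mulr0 add0r.
Qed.

Lemma scheme_withP rho (w : grid) :
  scheme_with L dt b rhok rho (fun i l => w i l / dt) <->
  [/\ rho = rho_of w, admissible w & balanced w].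
Proof.
have dt0 := lt0r_neq0 dt_gt0.
have fric i l : \sum_j b i j * rhat j l * (w i l / dt - w j l / dt) = dt^-1 * friction w i l.
  by rewrite /friction mulr_sumr; apply: eq_bigr => j _; ring.
have div i l : d_h h (gmul (hat (rhok i)) (fun l => w i l / dt)) l = div_flux w i l / dt.
  by rewrite /div_flux /d_h /gmul; ring.
have mean l : \sum_j rhat j l * (w j l / dt) = (\sum_j rhat j l * w j l) / dt.
  by rewrite mulr_suml; apply: eq_bigr => j _; ring.
split=> [S | [-> aw bal] i l].
  have rhoE : rho = rho_of w.
    apply/funext => i; apply/funext => l; have [+ _ _] := S i l.
    rewrite div -mulrDl => /eqP; rewrite mulf_eq0 invr_eq0 (negbTE dt0) orbF => /eqP.
    by rewrite /rho_of; lra.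
  subst rho; split=> // [l | i l].
    have [_ _ /eqP] := S (Ordinal n_gt0) l.
    by rewrite mean mulf_eq0 invr_eq0 (negbTE dt0) orbF => /eqP.
  have [_ + _] := S i l; rewrite fric sum_rhat invr1 mul1r sum_rhat_force /force; lra.
split; first by rewrite div /rho_of; ring.
  by rewrite fric sum_rhat invr1 mul1r; have := bal i l; rewrite sum_rhat_force /force; lra.
by rewrite mean aw mul0r.
Qed.

Lemma solves_schemeP rho :
  solves_scheme L dt b rhok rho <-> exists w, [/\ rho = rho_of w, admissible w & balanced w].
Proof.
split=> [[v S] | [w /scheme_withP S]]; last by exists (fun i l => w i l / dt).
exists (fun i l => dt * v i l); apply/scheme_withP.
have -> : (fun i l => dt * v i l / dt) = v.
  by apply/funext => i; apply/funext => l; rewrite mulrC mulKf ?lt0r_neq0.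
exact: S.
Qed.

Lemma Jw_ge_bregman (w w' : grid) : admissible w -> balanced w -> rho_pos w ->
  admissible w' -> rho_pos w' ->
  Jw w + h * \sum_l \sum_i xlnx_bregman (rho_of w' i l) (rho_of w i l) <= Jw w'.
Proof.
move=> aw bw pw aw' pw'; have := Jw_sub w w'.
rewrite (proj1 (balancedP w) bw _ (admissibleB aw aw')) add0r.
have := dissipation_ge0 (fun i l => w' i l - w i l); lra.
Qed.

Lemma sum_bregman_ge0 (w w' : grid) : rho_pos w -> rho_pos w' ->
  0 <= \sum_l \sum_i xlnx_bregman (rho_of w' i l) (rho_of w i l).
Proof. by move=> pw pw'; do 2 (apply: sumr_ge0 => ? _); exact: xlnx_bregman_ge0. Qed.

Lemma balanced_Jw_min (w w' : grid) : admissible w -> balanced w -> rho_pos w ->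
  admissible w' -> rho_pos w' -> Jw w <= Jw w'.
Proof.
move=> aw bw pw aw' pw'; have := Jw_ge_bregman aw bw pw aw' pw'.
have := mulr_ge0 (ltW h_gt0) (sum_bregman_ge0 pw pw'); lra.
Qed.

Lemma balanced_rho_of_eq (w w' : grid) : admissible w -> balanced w -> rho_pos w ->
  admissible w' -> rho_pos w' -> Jw w' <= Jw w -> rho_of w' = rho_of w.
Proof.
move=> aw bw pw aw' pw' Jle; have := Jw_ge_bregman aw bw pw aw' pw'.
have S0 := sum_bregman_ge0 pw pw'.
move=> Jge; have /eqP : \sum_l \sum_i xlnx_bregman (rho_of w' i l) (rho_of w i l) = 0.
  apply/eqP; rewrite eq_le S0 andbT -(pmulr_rle0 _ h_gt0); lra.
rewrite psumr_eq0 => [/allP S|l _]; last by apply: sumr_ge0 => i _; exact: xlnx_bregman_ge0.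
apply/funext => i; apply/funext => l; apply/eqP; apply: contraT => ne.
have := S l (mem_index_enum l); rewrite psumr_eq0 => [/allP/(_ i (mem_index_enum i))|k _].
  by rewrite (gt_eqF (xlnx_bregman_gt0 _ _ ne)).
exact: xlnx_bregman_ge0.
Qed.

(** * Existence of a critical point *)

(* On a sublevel set the entropy is bounded below, hence so is the dissipation and with it every
   difference [w i l - w j l]; the constraint [admissible w] then bounds [w] itself. *)
Lemma exists_sublevel_bound : exists2 M, 0 <= M & forall w, admissible w -> rho_pos w ->
  Jw w <= Jw (fun _ _ => 0) -> forall i l, `|w i l| <= M.
Proof.
pose g (p : 'I_N * 'I_n * 'I_n) :=
  if p.1.2 == p.2 then 1 else b p.1.2 p.2 * rhat p.1.2 p.1.1 * rhat p.2 p.1.1.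
have [c c0 cg] : exists2 c, 0 < c & forall p, c <= g p.
  apply: exists_pos_lbound => -[[l i] j]; rewrite /g /=.
  have [_|/b_gt0_sym [bij _]] := eqVneq i j; first exact: ltr01.
  by rewrite /=; apply: mulr_gt0; [apply: mulr_gt0 | ]; rewrite ?rhat_gt0.
pose K := 4 * dt / h * (Jw (fun _ _ => 0) + h * \sum_(l < N) \sum_(i < n) 1).
have scale_gt0 : 0 < 4 * dt / h by apply: divr_gt0 h_gt0; apply: mulr_gt0.
have K0 : 0 <= K.
  apply: mulr_ge0 (ltW scale_gt0) _; rewrite JwE rho_of0.
  by have := dissipation_ge0 (fun _ _ => 0); have := entropy_ge rhok_gt0; lra.
have M0 : 0 <= 1 + K / c by apply: addr_ge0; [exact: ler01 | exact: divr_ge0 K0 (ltW c0)].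
exists (1 + K / c) => // w aw pw Jle i l.
have QK : 4 * dt / h * dissipation w <= K.
  by rewrite /K ler_pM2l //; have := entropy_ge pw; rewrite JwE in Jle; lra.
apply: (@centered_norm_le _ _ (fun j => rhat j l) (fun j => w j l)) => [j|||i' j].
- exact/ltW/rhat_gt0.
- exact: sum_rhat.
- exact: aw.
have [->|ij] := eqVneq i' j; first by rewrite subrr normr0.
apply: le_trans (normr_le1Dsqr _) _; rewrite lerD2l ler_pdivlMr //.
apply: le_trans QK; apply: le_trans (dissipation_term_le w l i' j).
have cb : c <= b i' j * rhat i' l * rhat j l by have := cg (l, i', j); rewrite /g /= (negbTE ij).
by rewrite mulrC; apply: ler_wpM2r cb; exact: sqr_ge0.
Qed.

Local Open Scope classical_set_scope.

(* Grids are coordinatized by row vectors, whose closed boxes are compact. *)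
Definition grid_of (u : 'rV[R]_(n * N)) : grid := fun i l => u ord0 (mxvec_index i l).

Lemma grid_of_mxvec (w : grid) : grid_of (mxvec (\matrix_(i, l) w i l)) = w.
Proof. by apply/funext => i; apply/funext => l; rewrite /grid_of mxvecE mxE. Qed.

Lemma grid_of0 : grid_of 0 = fun _ _ => 0.
Proof. by apply/funext => i; apply/funext => l; rewrite /grid_of mxE. Qed.

Ltac grid_continuity := repeat first
  [ apply: continuous_sum => ? | apply: continuousD | apply: continuousN
  | apply: continuousM | exact: cst_continuous | exact: coord_continuous ].

Lemma continuous_rho_of i l u : {for u, continuous (fun v => rho_of (grid_of v) i l)}.
Proof. by rewrite /rho_of /div_flux /d_h /gmul /grid_of; grid_continuity. Qed.

Lemma continuous_Jw u : rho_pos (grid_of u) -> {for u, continuous (fun v => Jw (grid_of v))}.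
Proof.
move=> pu; rewrite /Jw /J; apply: continuousD.
  by rewrite /grid_of; grid_continuity.
apply: continuousM; first exact: cst_continuous.
apply: continuous_sum => l; apply: continuous_sum => i.
apply: continuousM; first exact: continuous_rho_of.
by apply: continuous_lnf; [exact: continuous_rho_of | exact: pu].
Qed.

Lemma closed_feasible eps : closed [set u | feasible eps (grid_of u)].
Proof.
have -> : [set u | feasible eps (grid_of u)] =
    \bigcap_(l in [set: 'I_N]) ((fun u => \sum_i rhat i l * grid_of u i l) @^-1` [set x | x = 0])
    `&` \bigcap_(p in [set: 'I_n * 'I_N])
          ((fun u => rho_of (grid_of u) p.1 p.2) @^-1` [set x | eps <= x]).
  apply/seteqP; split=> u [au bu]; split.
  - by move=> l _; exact: au.
  - by move=> [i l] _; exact: bu.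
  - by move=> l; exact: au l I.
  - by move=> i l; exact: bu (i, l) I.
apply: closedI; apply: closed_bigI => p _; apply: preimage_closed => [u _|].
- by rewrite /grid_of; grid_continuity.
- exact: closed_eq.
- exact: continuous_rho_of.
- exact: closed_ge.
Qed.

Lemma exists_Jw_min eps M : 0 < eps -> (forall i l, eps <= rhok i l) ->
  (forall w, admissible w -> rho_pos w -> Jw w <= Jw (fun _ _ => 0) -> forall i l, `|w i l| <= M) ->
  exists w, [/\ feasible eps w, forall w', feasible eps w' -> Jw w <= Jw w'
    & forall i l, `|w i l| <= M].
Proof.
move=> eps0 epsk bound.
have M0 : 0 <= M.
  by have := bound _ admissible0 rho_pos0 (lexx _) (Ordinal n_gt0) (Ordinal N_gt0); rewrite normr0.
pose A := [set u : 'rV[R]_(n * N) | forall k, `[- M, M] (u ord0 k)]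
  `&` [set u | feasible eps (grid_of u)].
have cA : compact A.
  rewrite /A; apply: compact_closedI; last exact: closed_feasible.
  by apply: (@rV_compact _ _ (fun=> `[- M, M])) => _; exact: segment_compact.
have A0 : A 0.
  split=> [k|]; first by rewrite /= mxE in_itv /= oppr_le0 M0.
  by rewrite /= grid_of0; split; [exact: admissible0 | move=> i l; rewrite rho_of0].
have cJ : {within A, continuous (fun u => Jw (grid_of u))}.
  apply: continuous_in_subspaceT => u /set_mem [_ fu].
  exact/continuous_Jw/(feasible_pos eps0 fu).
have [c /set_mem [cM fc] cmin] := EVT_min_rV (ex_intro _ 0 A0) cA cJ.
exists (grid_of c); split=> // [w' fw' | i l]; last first.
  by have := cM (mxvec_index i l); rewrite /= in_itv /= -ler_norml.
have [Jle|Jgt] := leP (Jw w') (Jw (fun _ _ => 0)); last first.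
  by rewrite -grid_of0 in Jgt; exact: le_trans (cmin 0 (mem_set A0)) (ltW Jgt).
have bw' := bound w' fw'.1 (feasible_pos eps0 fw') Jle.
rewrite -(grid_of_mxvec w'); apply: cmin; apply: mem_set; split; last by rewrite /= grid_of_mxvec.
by move=> k; case: (mxvec_indexP k) => i l; rewrite /= mxvecE mxE in_itv /= -ler_norml.
Qed.

Local Close Scope classical_set_scope.

Lemma Jw_shift_le (w z : grid) t : rho_pos w -> rho_pos (fun i l => w i l + t * z i l) ->
  Jw (fun i l => w i l + t * z i l) - Jw w <= t * dJw w z
    + t ^+ 2 * (dissipation z + h * \sum_l \sum_i div_flux z i l ^+ 2 / rho_of w i l).
Proof.
move=> pw pwt; rewrite Jw_sub.
have -> : (fun i l => w i l + t * z i l - w i l) = (fun i l => t * z i l).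
  by apply/funext => i; apply/funext => l; rewrite addrAC subrr add0r.
rewrite dJwZ dissipationZ mulrDr -addrA !lerD2l.
rewrite mulrCA ler_wpM2l ?(ltW h_gt0) // mulr_sumr ler_sum // => l _.
rewrite mulr_sumr ler_sum // => i _.
apply: le_trans (xlnx_bregman_le (pwt i l) (pw i l)) _.
by rewrite rho_of_shift le_eqVlt; apply/orP; left; apply/eqP; ring.
Qed.

Lemma dJw_ge0_at_min eps (w z : grid) t0 : 0 < eps -> feasible eps w ->
  (forall w', feasible eps w' -> Jw w <= Jw w') -> 0 < t0 ->
  (forall t, 0 < t -> t <= t0 -> feasible eps (fun i l => w i l + t * z i l)) -> 0 <= dJw w z.
Proof.
move=> eps0 fw wmin t00 ft.
pose C := dissipation z + h * \sum_l \sum_i div_flux z i l ^+ 2 / rho_of w i l.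
apply: (@first_order_ge0 _ _ C t0 t00) => t t_gt0 t_le.
have := Jw_shift_le (feasible_pos eps0 fw) (feasible_pos eps0 (ft t t_gt0 t_le)).
have := wmin _ (ft t t_gt0 t_le); rewrite /C; lra.
Qed.

Lemma feasible_shift eps (w z : grid) : admissible w -> (forall i l, eps < rho_of w i l) ->
  admissible z -> exists2 t0, 0 < t0 &
    forall t, 0 < t -> t <= t0 -> feasible eps (fun i l => w i l + t * z i l).
Proof.
move=> aw wint az.
have d0 i l : 0 < `|div_flux z i l| + 1 by rewrite ltr_wpDl.
have [t0 t00 t0le] : exists2 t0, 0 < t0 & forall p : 'I_n * 'I_N,
    t0 <= (rho_of w p.1 p.2 - eps) / (`|div_flux z p.1 p.2| + 1).
  by apply: exists_pos_lbound => -[i l]; rewrite divr_gt0 ?subr_gt0.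
exists t0 => // t t_gt0 t_le; split=> [|i l]; first exact: admissible_shift.
have k1 : t * (`|div_flux z i l| + 1) <= rho_of w i l - eps.
  by rewrite -ler_pdivlMr // (le_trans t_le (t0le (i, l))).
have k2 : t * div_flux z i l <= t * `|div_flux z i l| by rewrite ler_pM2l // ler_norm.
by rewrite rho_of_shift; rewrite mulrDr mulr1 in k1; lra.
Qed.

Lemma balanced_of_interior_min eps (w : grid) : 0 < eps -> feasible eps w ->
  (forall w', feasible eps w' -> Jw w <= Jw w') -> (forall i l, eps < rho_of w i l) ->
  balanced w.
Proof.
move=> eps0 fw wmin wint; apply/balancedP => z az.
have [t1 t10 f1] := feasible_shift fw.1 wint az.
have [t2 t20 f2] := feasible_shift fw.1 wint (admissibleZ (-1) az).
have := dJw_ge0_at_min eps0 fw wmin t10 f1.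
by have := dJw_ge0_at_min eps0 fw wmin t20 f2; rewrite dJwZ; lra.
Qed.

(* Species [i] gains and species [j] loses unit mass at cell [l0], and conversely at cell [l1];
   see [div_flux_transfer]. *)
Definition transfer (i j : 'I_n) (l0 l1 : 'I_N) : grid := fun k l =>
  h * (heaviside l1 l - heaviside l0 l) * ((k == i)%:R - (k == j)%:R) / rhat k l.

Lemma rhat_transfer i j l0 l1 k l : rhat k l * transfer i j l0 l1 k l =
  h * (heaviside l1 l - heaviside l0 l) * ((k == i)%:R - (k == j)%:R).
Proof. by rewrite /transfer mulrC divfK // lt0r_neq0 ?rhat_gt0. Qed.

Lemma admissible_transfer i j l0 l1 : admissible (transfer i j l0 l1).
Proof.
move=> l; under eq_bigr do rewrite rhat_transfer.
by rewrite -mulr_sumr sumrB !sum_delta1 subrr mulr0.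
Qed.

Lemma div_flux_transfer i j l0 l1 k l : div_flux (transfer i j l0 l1) k l =
  ((l == l1)%:R - (l == l0)%:R) * ((k == i)%:R - (k == j)%:R).
Proof.
rewrite -(@d_h_heavisideB _ _ h l1 l0 l) ?lt0r_neq0 ?h_gt0 //.
by rewrite /div_flux /d_h /gmul !rhat_transfer; ring.
Qed.

Lemma dJw_transfer (w : grid) i j l0 l1 : dJw w (transfer i j l0 l1) =
  h * (dt^-1 * \sum_l h * (heaviside l1 l - heaviside l0 l) * (friction w i l - friction w j l)
    + ((ln (rho_of w i l0) - ln (rho_of w j l0)) - (ln (rho_of w i l1) - ln (rho_of w j l1)))).
Proof.
pose g l := ln (rho_of w i l) - ln (rho_of w j l).
have logs : \sum_l h * (heaviside l1 l - heaviside l0 l) * D_h h g l = g l0 - g l1.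
  rewrite -[LHS]opprK -sum_d_hM.
  under eq_bigr do rewrite d_h_heavisideB ?lt0r_neq0 ?h_gt0 // mulrBl.
  by rewrite sumrB !sum_delta opprB.
rewrite /dJw -logs [dt^-1 * _]mulr_sumr -big_split /=; congr (_ * _); apply: eq_bigr => l _.
transitivity (\sum_k h * (heaviside l1 l - heaviside l0 l)
    * (((k == i)%:R - (k == j)%:R) * force w k l)).
  by apply: eq_bigr => k _; rewrite rhat_transfer; ring.
rewrite -mulr_sumr; under eq_bigr do rewrite mulrBl.
by rewrite sumrB !sum_delta /force /D_h /glog /g; ring.
Qed.

Lemma normr_friction_le (w : grid) M i l : (forall i l, `|w i l| <= M) ->
  `|friction w i l| <= 2 * M * \sum_i \sum_j `|b i j|.
Proof.
move=> wM; have M0 : 0 <= M := le_trans (normr_ge0 _) (wM i l).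
apply: le_trans (_ : _ <= 2 * M * \sum_j `|b i j|) _; last first.
  rewrite [X in _ <= X]mulr_sumr.
  apply: (@ler_sum_term _ _ (fun k => 2 * M * \sum_j `|b k j|)) => k.
  by apply: mulr_ge0; [apply: mulr_ge0 | apply: sumr_ge0 => j _].
apply: le_trans (ler_norm_sum _ _ _) _; rewrite mulr_sumr; apply: ler_sum => j _.
rewrite 2!normrM (ger0_norm (ltW (rhat_gt0 j l))) [_ * `|b i j|]mulrC -mulrA.
apply: ler_wpM2l; first exact: normr_ge0.
apply: le_trans (ler_wpM2r (normr_ge0 _) (rhat_le1 j l)) _; rewrite mul1r.
by apply: le_trans (ler_normB _ _) _; have := wM i l; have := wM j l; lra.
Qed.

Definition transfer_cost M := 4 * L / dt * M * \sum_i \sum_j `|b i j|.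

Lemma transfer_cost_ge0 M : 0 <= M -> 0 <= transfer_cost M.
Proof.
move=> M0; apply: mulr_ge0; last by do 2 (apply: sumr_ge0 => ? _); exact: normr_ge0.
apply: mulr_ge0 M0; apply: divr_ge0; last exact: ltW.
by apply: mulr_ge0; [exact: ler0n | exact: ltW].
Qed.

Lemma transfer_friction_le (w : grid) M i j l0 l1 : (forall i l, `|w i l| <= M) ->
  dt^-1 * \sum_l h * (heaviside l1 l - heaviside l0 l) * (friction w i l - friction w j l)
    <= transfer_cost M.
Proof.
move=> wM; set B := 2 * M * \sum_i \sum_j `|b i j|.
have -> : transfer_cost M = dt^-1 * (\sum_(l < N) h * (2 * B)).
  rewrite sumr_const card_ord -mulr_natl /transfer_cost /B.
  by transitivity (4 * (N%:R * h) / dt * M * \sum_i \sum_j `|b i j|); [rewrite N_mul_h | ring].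
rewrite ler_pM2l ?invr_gt0 //; apply: le_trans (ler_norm _) _.
apply: le_trans (ler_norm_sum _ _ _) _; apply: ler_sum => l _.
rewrite 2!normrM (ger0_norm (ltW h_gt0)) -mulrA ler_pM2l ?h_gt0 //.
rewrite -[2 * B]mul1r; apply: ler_pM; rewrite ?normr_ge0 ?normr_heavisideB //.
apply: le_trans (ler_normB _ _) _.
by have := normr_friction_le i l wM; have := normr_friction_le j l wM; rewrite /B; lra.
Qed.

Lemma exists_rich_species (w : grid) l : admissible w -> exists j, n%:R^-1 <= rho_of w j l.
Proof.
move=> aw; apply: exists_ge_mean; first by rewrite card_ord.
by rewrite card_ord sum_rho_of // mulfV // pnatr_eq0 -lt0n.
Qed.

Lemma exists_rich_cell (w : grid) mu i : (forall i l, mu <= rhok i l) ->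
  exists l, mu <= rho_of w i l.
Proof.
move=> mule; apply: exists_ge_mean; first by rewrite card_ord.
rewrite card_ord mass_rho_of; apply: le_trans (ler_sum _ (fun l _ => mule i l)).
by rewrite sumr_const card_ord mulr_natl.
Qed.

Lemma transfer_feasible eps (w : grid) i j l0 l1 t0 : feasible eps w -> i != j -> l0 != l1 ->
  t0 + eps <= rho_of w i l1 -> t0 + eps <= rho_of w j l0 ->
  forall t, 0 < t -> t <= t0 -> feasible eps (fun k l => w k l + t * transfer i j l0 l1 k l).
Proof.
move=> [aw wge] ij l01 hi hj t t_gt0 t_le.
split=> [|k l]; first exact: admissible_shift (admissible_transfer _ _ _ _).
rewrite rho_of_shift div_flux_transfer; have := wge k l.
case ki : (k == i); case kj : (k == j); case ll0 : (l == l0); case ll1 : (l == l1);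
  rewrite /= ?mulr1n ?mulr0n => wkl.
all: first [ lra | by move: ki ll1 => /eqP -> /eqP ->; lra
            | by move: kj ll0 => /eqP -> /eqP ->; lra ].
Qed.

(* If a density touched [eps], moving mass along [transfer] would lower [Jw] to first order:
   the entropy gain [ln (mu / n) - ln eps] exceeds the friction cost [transfer_cost M]. *)
Lemma interior_min eps mu M (w : grid) : 0 < eps -> 0 < mu -> (forall i l, mu <= rhok i l) ->
  ln eps + transfer_cost M < ln (mu / n%:R) -> feasible eps w ->
  (forall w', feasible eps w' -> Jw w <= Jw w') -> (forall i l, `|w i l| <= M) ->
  forall i l, eps < rho_of w i l.
Proof.
move=> eps0 mu0 mule small fw wmin wM i0 l0; rewrite ltNge; apply/negP => low.
have pw := feasible_pos eps0 fw.
have n0 : 0 < (n%:R : R) by rewrite ltr0n.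
set m := Num.min mu n%:R^-1.
have [m_mu m_n] : m <= mu /\ m <= n%:R^-1 by rewrite !ge_min !lexx orbT.
have mun : mu / n%:R <= m.
  rewrite le_min; apply/andP; split.
    by rewrite -[X in _ <= X]mulr1 ler_pM2l // invf_le1 // ler1n.
  rewrite -[X in _ <= X]mul1r ler_pM2r ?invr_gt0 //.
  exact: le_trans (mule i0 l0) (rhok_le1 i0 l0).
have cost0 := transfer_cost_ge0 (le_trans (normr_ge0 _) (wM i0 l0)).
have eps_lt : eps < mu / n%:R by rewrite -ltr_ln ?posrE ?divr_gt0 //; lra.
have [j hj] := exists_rich_species l0 fw.1.
have [l1 hl1] := exists_rich_cell w i0 mule.
have ij : i0 != j by apply: contraTneq hj => <-; rewrite -ltNge; lra.
have l01 : l0 != l1 by apply: contraTneq hl1 => <-; rewrite -ltNge; lra.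
have := dJw_ge0_at_min eps0 fw wmin (t0 := m - eps) _
  (transfer_feasible fw ij l01 _ _); rewrite subr_gt0 subrK.
move=> /(_ (lt_le_trans eps_lt mun) (le_trans m_mu hl1) (le_trans m_n hj)).
rewrite dJw_transfer pmulr_rge0 ?h_gt0 //.
have := transfer_friction_le i0 j l0 l1 wM.
have : ln (rho_of w i0 l0) <= ln eps by rewrite ler_ln ?posrE.
have : ln (n%:R^-1) <= ln (rho_of w j l0) by rewrite ler_ln ?posrE ?invr_gt0.
have : ln mu <= ln (rho_of w i0 l1) by rewrite ler_ln ?posrE.
have : ln (rho_of w j l1) <= 0 by apply: ln_le0; exact: rho_of_le1 fw.1 pw.
move: small; rewrite lnM ?posrE ?invr_gt0 //; lra.
Qed.

Lemma exists_balanced : exists2 eps, 0 < eps & exists w, feasible eps w /\ balanced w.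
Proof.
have [M M0 bound] := exists_sublevel_bound.
have [mu mu0 mule] := @exists_pos_lbound _ _ (fun p : 'I_n * 'I_N => rhok p.1 p.2)
  (fun p => rhok_gt0 p.1 p.2).
have n0 : 0 < (n%:R : R) by rewrite ltr0n.
have cost0 := transfer_cost_ge0 M0.
pose eps := mu / n%:R * expR (- (transfer_cost M + 1)).
have eps0 : 0 < eps by apply: mulr_gt0 (divr_gt0 mu0 n0) (expR_gt0 _).
have small : ln eps + transfer_cost M < ln (mu / n%:R).
  by rewrite lnM ?posrE ?divr_gt0 ?expR_gt0 // expRK; lra.
have epsk i l : eps <= rhok i l.
  apply: le_trans (mule (i, l)); rewrite /eps -[X in _ <= X]mulr1 -mulrA.
  rewrite ler_pM2l // -[X in _ <= X]mulr1.
  apply: ler_pM; rewrite ?invr_ge0 ?(ltW n0) ?expR_ge0 ?invf_le1 ?ler1n //.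
  by rewrite -[X in _ <= X]expR0 ler_expR; lra.
have [w [fw wmin wM]] := exists_Jw_min eps0 epsk bound.
exists eps => //; exists w; split => //.
exact: balanced_of_interior_min eps0 fw wmin
  (interior_min eps0 mu0 (fun i l => mule (i, l)) small fw wmin wM).
Qed.

Lemma scheme_iff_minimizer : exists2 delta0 : R, 0 < delta0 &
  forall delta : R, 0 < delta -> delta <= delta0 ->
  forall rho : grid, (forall i l, 0 < rho i l) ->
  (solves_scheme L dt b rhok rho <-> exists w, is_minimizer L dt b rhok delta rho w).
Proof.
have [eps eps0 [ws [fws bws]]] := exists_balanced.
have pws := feasible_pos eps0 fws.
have fws_delta delta : delta <= eps -> feasible delta ws.
  by move=> le_delta; split=> [|i l]; [exact: fws.1 | exact: le_trans le_delta (fws.2 i l)].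
exists eps => // delta delta0 le_delta rho rho0.
rewrite solves_schemeP; split=> [[w [rhoE aw bw]] | [w [/K_deltaP [-> fw] wmin]]].
  subst rho; have Jle := balanced_Jw_min aw bw rho0 fws.1 pws.
  have e := balanced_rho_of_eq fws.1 bws pws aw rho0 Jle.
  exists w; split.
    apply/K_deltaP; split=> //; split=> // i l; rewrite e.
    exact: (fws_delta _ le_delta).2.
  move=> rho' w' /K_deltaP [-> fw'].
  exact: balanced_Jw_min aw bw rho0 fw'.1 (feasible_pos delta0 fw').
have pw := feasible_pos delta0 fw.
have Jle := wmin _ _ (proj2 (K_deltaP _ _ _) (conj erefl (fws_delta _ le_delta))).
exists ws; split=> //; [exact: balanced_rho_of_eq fws.1 bws pws fw.1 pw Jle | exact: fws.1].
Qed.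

End Scheme.

Theorem theorem3p1 (R : realType) (n N : nat) (L dt : R)
  (b : 'I_n -> 'I_n -> R) (rhok : 'I_n -> 'I_N -> R) :
  (2 <= n)%N -> (1 <= N)%N -> 0 < L -> 0 < dt ->
  (forall i j : 'I_n, i != j -> 0 < b i j /\ b i j = b j i) ->
  (forall (i : 'I_n) (l : 'I_N), 0 < rhok i l) ->
  (forall l : 'I_N, \sum_(i < n) rhok i l = 1) ->
  exists2 delta0 : R, 0 < delta0 &
    forall delta : R, 0 < delta -> delta <= delta0 ->
    forall rhonew : 'I_n -> 'I_N -> R,
      (forall (i : 'I_n) (l : 'I_N), 0 < rhonew i l) ->
      (solves_scheme L dt b rhok rhonew <->
       exists w : 'I_n -> 'I_N -> R, is_minimizer L dt b rhok delta rhonew w).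
Proof.
move=> n_ge2 N_gt0 L_gt0 dt_gt0 b_gt0_sym rhok_gt0 sum_rhok.
exact: scheme_iff_minimizer (ltnW n_ge2) N_gt0 L_gt0 dt_gt0 b_gt0_sym rhok_gt0 sum_rhok.
Qed.
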